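(* Let $\Omega$ be an infinite compact Hausdorff space and let $\Gamma$ be a group acting on $\Omega$ by homeomorphisms, and let $n\ge 2$ be an integer. The induced action $\alpha$ of $\Gamma$ on $C(\Omega)$, $\alpha_g(f)(\omega)=f(g^{-1}\omega)$, is $n$-filling if and only if for any nonempty open subsets $U_1,\dots,U_n$ of $\Omega$ there exist $g_1,\dots,g_n\in\Gamma$ such that $g_1U_1\cup\dots\cup g_nU_n=\Omega$.
   Context: An action $\alpha$ of a group $\Gamma$ on a unital $C^*$-algebra $A$ is called $n$-filling if for all $b_1,\dots,b_n\in A^+$ with $\|b_j\|=1$ ($1\le j\le n$) and all $\epsilon>0$ there exist $g_1,\dots,g_n\in\Gamma$ such that $\sum_{j=1}^n\alpha_{g_j}(b_j)\ge 1-\epsilon$. *)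

From HB Require Import structures.
From mathcomp Require Import all_boot all_order all_algebra.
From mathcomp Require Import monoid.
From mathcomp Require Import all_classical all_reals topology normedtype.
From mathcomp Require Import Rstruct Rstruct_topology.
From Stdlib Require Import Rdefinitions.

Set Implicit Arguments.
Unset Strict Implicit.
Unset Printing Implicit Defensive.

Import Order.TTheory GRing.Theory Num.Theory.
Local Open Scope classical_set_scope.
Local Open Scope ring_scope.

(* An action of the group G on the topological space X by homeomorphisms:
   act 1 = id, act (g h) = act g o act h, and each act g is continuous
   (so act g is a homeomorphism with inverse act g^-1). *)
Definition is_action_by_homeos (G : groupType) (X : topologicalType)
    (act : G -> X -> X) : Prop :=
  (forall x, act (monoid.one : G) x = x) /\
  (forall g h x, act (monoid.mul g h) x = act g (act h x)) /\
  (forall g, continuous (act g)).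

(* Elements of C(X) relevant here: positive elements of C(X) are exactly the
   continuous functions X -> [0, +oo) (real valued). *)
Definition positive_elt (X : topologicalType) (b : X -> R) : Prop :=
  continuous b /\ (forall x, 0 <= b x).

Definition sup_norm (X : topologicalType) (b : X -> R) : R :=
  sup (range (fun x => `|b x|)).

Definition induced_action (G : groupType) (X : topologicalType)
    (act : G -> X -> X) (g : G) (f : X -> R) : X -> R :=
  fun w => f (act (monoid.inv g) w).

(* n-filling for the induced action on C(X): the order on self-adjoint
   elements of C(X) is the pointwise order, and 1 - eps is the constant
   function. *)
Definition n_filling (G : groupType) (X : topologicalType)
    (act : G -> X -> X) (n : nat) : Prop :=
  forall b : 'I_n -> X -> R,
    (forall j, positive_elt (b j)) ->
    (forall j, sup_norm (b j) = 1) ->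
    forall eps : R, 0 < eps ->
    exists g : 'I_n -> G,
      forall w, 1 - eps <= \sum_(j < n) induced_action act (g j) (b j) w.

Definition open_covering_property (G : groupType) (X : topologicalType)
    (act : G -> X -> X) (n : nat) : Prop :=
  forall U : 'I_n -> set X,
    (forall j, open (U j)) -> (forall j, U j !=set0) ->
    exists g : 'I_n -> G,
      \bigcup_(j in [set: 'I_n]) (act (g j) @` U j) = [set: X].

From HB Require Import structures.
From mathcomp Require Import all_boot all_order all_algebra.
From mathcomp Require Import monoid.
From mathcomp Require Import all_classical all_reals topology normedtype.
From mathcomp Require Import Rstruct Rstruct_topology.
From mathcomp Require Import urysohn lra.
From Stdlib Require Import Rdefinitions.

(* If the action is n-filling, take Urysohn functions b_j of norm 1 supported
   in U_j; a point outside every g_j U_j would give sum_j alpha_{g_j}(b_j) = 0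
   there, contradicting the bound 1/2. Conversely, for b_j >= 0 of norm 1 the
   open sets U_j = {b_j > 1 - eps} are nonempty, and if the g_j U_j cover the
   space then at every point one term of the (nonnegative) sum exceeds
   1 - eps. *)

Set Implicit Arguments.
Unset Strict Implicit.
Unset Printing Implicit Defensive.

Import Order.TTheory GRing.Theory Num.Theory.
Local Open Scope classical_set_scope.
Local Open Scope ring_scope.

Section action_by_homeos.
Variables (G : groupType) (X : topologicalType) (act : G -> X -> X).
Hypothesis act_homeo : is_action_by_homeos act.

Lemma act_invK (g : G) : cancel (act g) (act (monoid.inv g)).
Proof.
by case: act_homeo => act1 [actM _] x; rewrite -actM monoid.mulVg act1.
Qed.

Lemma act_Kinv (g : G) : cancel (act (monoid.inv g)) (act g).
Proof.
by case: act_homeo => act1 [actM _] x; rewrite -actM monoid.mulgV act1.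
Qed.

End action_by_homeos.

Lemma compact_hausdorff_completely_regular (X : topologicalType) :
  compact [set: X] -> hausdorff_space X -> completely_regular_space X.
Proof.
move=> cX hX; apply: (@normal_completely_regular R).
  exact: compact_normal.
exact: hausdorff_accessible.
Qed.

Lemma completely_regular_bump (X : topologicalType) (U : set X) (x : X) :
  completely_regular_space X -> open U -> U x ->
  exists b : X -> R, [/\ continuous b, (forall y, 0 <= b y <= 1), b x = 1 &
    (forall y, ~ U y -> b y = 0)].
Proof.
move=> crX oU Ux.
have clCU : closed (~` U) by rewrite closedC.
have /(crX x _ clCU) : ~ (~` U) x by [].
move=> /(@uniform_separatorP X R) [f [cf f01 fx0 fCU1]].
exists (fun y => 1 - f y); split.
- by move=> y; apply: (@continuousB R R^o X (cst 1) f y (cvg_cst _) (cf y)).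
- move=> y; have /= := f01 (f y) (ex_intro2 _ _ y I erefl).
  by rewrite in_itv /= => /andP[f0 f1]; rewrite subr_ge0 f1 lerBlDr lerDl f0.
- by rewrite (_ : f x = 0) ?subr0 //; apply: fx0; exists x.
- by move=> y nUy; rewrite (_ : f y = 1) ?subrr //; apply: fCU1; exists y.
Qed.

Lemma sup_norm_unit_peak (X : topologicalType) (b : X -> R) (x : X) :
  (forall y, 0 <= b y <= 1) -> b x = 1 -> sup_norm b = 1.
Proof.
move=> b01 bx1.
have norm_le1 : ubound (range (fun y => `|b y|)) 1.
  by move=> _ [y _ <-]; case/andP: (b01 y) => b0 b1; rewrite ger0_norm.
apply/eqP; rewrite eq_le; apply/andP; split.
- by apply: ge_sup => //; exists `|b x|, x.
- by rewrite -{1}normr1 -bx1; apply: ub_le_sup; [exists 1 | exists x].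
Qed.

(* Positivity of the norm rules out an empty space, where [sup set0 = 0]. *)
Lemma sup_norm_gt (X : topologicalType) (b : X -> R) (r : R) :
  0 < sup_norm b -> r < sup_norm b -> exists y, r < `|b y|.
Proof.
move=> norm_gt0 r_lt; rewrite /sup_norm in norm_gt0 r_lt.
have [range0|/set0P range_neq0] := eqVneq (range (fun y => `|b y|)) set0.
  by move: norm_gt0; rewrite range0 sup0 ltxx.
have [_ [y _ <-] r_lt_y] := sup_gt range_neq0 r_lt.
by exists y.
Qed.

Lemma n_filling_open_covering (G : groupType) (X : topologicalType)
    (act : G -> X -> X) (n : nat) :
  completely_regular_space X -> is_action_by_homeos act ->
  n_filling act n -> open_covering_property act n.
Proof.
move=> crX act_homeo filling U oU U0.
have /choice [x Ux] := U0.
have /choice [b bump] : forall j, exists b : X -> R,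
    [/\ continuous b, (forall y, 0 <= b y <= 1), b (x j) = 1 &
      (forall y, ~ U j y -> b y = 0)].
  by move=> j; exact: completely_regular_bump.
have b_pos j : positive_elt (b j).
  by case: (bump j) => cb b01 _ _; split=> // y; case/andP: (b01 y).
have b_norm j : sup_norm (b j) = 1.
  by case: (bump j) => _ b01 bx1 _; exact: sup_norm_unit_peak bx1.
have [g sum_ge] := filling b b_pos b_norm (2^-1) ltac:(by rewrite invr_gt0).
exists g; apply/seteqP; split=> // w _; apply: contrapT => uncovered.
have := sum_ge w; rewrite big1; first lra.
move=> j _; rewrite /induced_action; case: (bump j) => _ _ _ -> // Uw.
apply: uncovered.
by exists j => //; exists (act (monoid.inv (g j)) w); rewrite ?act_Kinv.
Qed.

Lemma open_covering_n_filling (G : groupType) (X : topologicalType)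
    (act : G -> X -> X) (n : nat) :
  is_action_by_homeos act ->
  open_covering_property act n -> n_filling act n.
Proof.
move=> act_homeo covering b b_pos b_norm eps eps_gt0.
pose U j := b j @^-1` [set r | 1 - eps < r].
have oU j : open (U j).
  case: (b_pos j) => cb _.
  by apply: open_comp => [y _|]; [exact: cb | exact: open_gt].
have U0 j : U j !=set0.
  have [y] : exists y, 1 - eps < `|b j y|.
    by apply: sup_norm_gt; rewrite b_norm // ltrBlDr ltrDl.
  by case: (b_pos j) => _ b0; rewrite ger0_norm //; exists y.
have [g cover] := covering U oU U0.
exists g => w; have : [set: X] w by [].
rewrite -cover => -[j _ [u Uu <-]].
rewrite (bigD1 j) //= {1}/induced_action act_invK //.
apply: le_trans (ltW Uu) _; rewrite lerDl.
by apply: sumr_ge0 => i _; case: (b_pos i) => _ b0; exact: b0.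
Qed.

Local Close Scope ring_scope.

Theorem proposition0p3 (G : groupType) (X : topologicalType)
    (act : G -> X -> X) (n : nat) :
  compact [set: X] -> hausdorff_space X -> infinite_set [set: X] ->
  is_action_by_homeos act -> (2 <= n)%N ->
  n_filling act n <-> open_covering_property act n.
Proof.
move=> cX hX _ act_homeo _; split.
- apply: n_filling_open_covering => //.
  exact: compact_hausdorff_completely_regular.
- exact: open_covering_n_filling.
Qed.
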